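(* In the following setting: $\mathcal{W}$ is the weight space of an MLP, $G$ its neuron-permutation group acting orthonormally on $\mathcal{W}$ (see context), $p(\boldsymbol{\omega})$ a $G$-invariant prior density, $p(\mathbf{Y}\mid\mathbf{X},\boldsymbol{\omega})$ a likelihood that is $G$-invariant in $\boldsymbol{\omega}$, $q_\theta$ a variational density on $\mathcal{W}$ with symmetrization $q_\theta^G(\boldsymbol{\omega})=\frac{1}{|G|}\sum_{g\in G}q_\theta(g^{-1}\cdot\boldsymbol{\omega})$, and $$\mathcal{L}_{\mathrm{VI}}(\theta)=\mathbb{E}_{q_\theta}\log p(\mathbf{Y}\mid\mathbf{X},\boldsymbol{\omega})-\mathrm{KL}(q_\theta\|p),\quad \mathcal{L}^G_{\mathrm{VI}}(\theta)=\mathbb{E}_{q^G_\theta}\log p(\mathbf{Y}\mid\mathbf{X},\boldsymbol{\omega})-\mathrm{KL}(q^G_\theta\|p)$$ (all assumed finite). Then for every variational parameter $\theta$, $\mathcal{L}^G_{\mathrm{VI}}(\theta)\ge\mathcal{L}_{\mathrm{VI}}(\theta)$, with equality if and only if $q_\theta$ is $G$-invariant.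
   Context: The MLP weight space is $\mathcal{W}=\bigoplus_{l=1}^L(\mathbb{R}^{d_l\times d_{l-1}}\oplus\mathbb{R}^{d_l})$ with $\boldsymbol{\omega}=(\mathbf{W}_1,\dots,\mathbf{W}_L,\mathbf{b}_1,\dots,\mathbf{b}_L)$ and Euclidean norm, and $G=S_{d_1}\times\dots\times S_{d_{L-1}}$. For $g=(\tau_1,\dots,\tau_{L-1})$ with permutation matrices $\mathbf{P}_{\tau_l}$, $g\cdot\boldsymbol{\omega}$ has $\mathbf{W}_1'=\mathbf{P}_{\tau_1}^\top\mathbf{W}_1$, $\mathbf{b}_1'=\mathbf{P}_{\tau_1}^\top\mathbf{b}_1$; $\mathbf{W}_l'=\mathbf{P}_{\tau_l}^\top\mathbf{W}_l\mathbf{P}_{\tau_{l-1}}$, $\mathbf{b}_l'=\mathbf{P}_{\tau_l}^\top\mathbf{b}_l$ for $2\le l\le L-1$; $\mathbf{W}_L'=\mathbf{W}_L\mathbf{P}_{\tau_{L-1}}$, $\mathbf{b}_L'=\mathbf{b}_L$. A density $h$ is $G$-invariant if $h(g\cdot\boldsymbol{\omega})=h(\boldsymbol{\omega})$ for all $g,\boldsymbol{\omega}$ (densities identified up to null sets). *)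

From HB Require Import structures.
From mathcomp Require Import all_boot all_order all_algebra all_fingroup.
From mathcomp Require Import all_classical all_reals all_analysis.
Set Implicit Arguments. Unset Strict Implicit. Unset Printing Implicit Defensive.
Import Order.TTheory GRing.Theory Num.Theory.
Local Open Scope ring_scope.
Local Open Scope classical_set_scope.

Section MLP.
Variables (R : realType) (L : nat) (d : nat -> nat).

(* Layers are indexed 0-based: layer l : 'I_L is the paper's layer l+1, with
   weight matrix W_{l+1} : d_{l+1} x d_l and bias b_{l+1} : d_{l+1}. *)

Definition coordI : finType :=
  ({l : 'I_L & ('I_(d l.+1) * 'I_(d l))%type} + {l : 'I_L & 'I_(d l.+1)})%type.

Definition dimW : nat := #|{: coordI}|.

(* The weight space W, as R^dimW (flattened via the enumeration of coordI);
   it carries the product (Borel) sigma-algebra on tuples. *)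
Definition weight_space := (dimW.-tuple R).

Definition coord (w : weight_space) (c : coordI) : R := tnth w (enum_rank c).

Definition Wmat (w : weight_space) (l : 'I_L) : 'M[R]_(d l.+1, d l) :=
  \matrix_(i, j) coord w (inl (existT _ l (i, j))).
Definition bvec (w : weight_space) (l : 'I_L) : 'cV[R]_(d l.+1) :=
  \col_i coord w (inr (existT _ l i)).

Definition pack (Ws : forall l : 'I_L, 'M[R]_(d l.+1, d l))
  (bs : forall l : 'I_L, 'cV[R]_(d l.+1)) : weight_space :=
  [tuple match enum_val i with
         | inl (existT l (a, b)) => Ws l a b
         | inr (existT l a) => bs l a ord0
         end | i < dimW].

(* G = S_{d_1} x ... x S_{d_{L-1}}; component k : 'I_L.-1 is tau_{k+1}. *)
Definition group_G : finType := {dffun forall k : 'I_L.-1, {perm 'I_(d k.+1)}}.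

(* tau_k for 1 <= k <= L-1, and the identity permutation for k = 0 or k >= L
   (this encodes the special form of the action on the first/last layers). *)
Definition permk (g : group_G) (k : nat) : {perm 'I_(d k)} :=
  match k with
  | 0 => 1%g
  | k'.+1 =>
    match (k' < L.-1)%N as b return (k' < L.-1)%N = b -> {perm 'I_(d k'.+1)} with
    | true => fun h => g (Ordinal h)
    | false => fun _ => 1%g
    end erefl
  end.

(* permutation matrix P_tau, (P_tau) i j = [tau i == j] *)
Definition Pmat (g : group_G) (k : nat) : 'M[R]_(d k) := perm_mx (permk g k).

Definition mlp_act (g : group_G) (w : weight_space) : weight_space :=
  pack (fun l => (Pmat g l.+1)^T *m Wmat w l *m Pmat g l)
       (fun l => (Pmat g l.+1)^T *m bvec w l).

Definition ginv (g : group_G) : group_G := finfun (fun k => ((g k)^-1)%g).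

Definition symmetrize (q : weight_space -> R) (w : weight_space) : R :=
  (#|{: group_G}|%:R)^-1 * \sum_(g : group_G) q (mlp_act (ginv g) w).

Variable (mu : set weight_space -> \bar R).

Definition is_lebesgue : Prop :=
  forall a b : weight_space, (forall i, tnth a i <= tnth b i) ->
    mu [set x | forall i, tnth a i <= tnth x i < tnth b i] =
    ((\prod_(i < dimW) (tnth b i - tnth a i))%:E).

End MLP.

Section Densities.
Variables (R : realType) (L : nat) (d : nat -> nat).
Local Notation W := (weight_space R L d).
Variable (mu : {measure set W -> \bar R}).

Definition is_density (f : W -> R) : Prop :=
  [/\ measurable_fun setT f, (forall w, 0 <= f w) &
      (\int[mu]_w (f w)%:E = 1)%E].

Definition G_invariant (f : W -> R) : Prop :=
  forall g : group_G L d, {ae mu, forall w, f (mlp_act g w) = f w}.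

Definition elog (x : R) : \bar R := if 0 < x then (ln x)%:E else -oo%E.

Definition klterm (a b : R) : \bar R :=
  if a == 0 then 0%E else if b == 0 then +oo%E else (a * ln (a / b))%:E.

Definition expected_loglik (lik q : W -> R) : \bar R :=
  (\int[mu]_w ((q w)%:E * elog (lik w)))%E.

Definition KL (q p : W -> R) : \bar R := (\int[mu]_w klterm (q w) (p w))%E.

Definition elbo (lik prior q : W -> R) : \bar R :=
  (expected_loglik lik q - KL q prior)%E.

End Densities.

(* Every g in G acts on W by permuting coordinates, so it preserves Lebesgue
   measure, which is determined by its values on boxes.  As the likelihood is
   G-invariant, E_{q^G} log p(Y|X,w) is the average over g of the integrals of
   q(g^-1 w) log p(Y|X,w), each of which equals E_q log p(Y|X,w).  For the KL
   term, t |-> t ln (t / b) is strictly convex, so by Jensen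
   klterm (q^G w) (p w) <= avg_g klterm (q (g^-1 w)) (p w) pointwise, and by
   invariance of p and of the measure every term on the right integrates to
   KL(q || p).  Equality of the integrals forces equality almost everywhere, and
   then strict convexity forces every q (g^-1 w) to equal q^G w = q w. *)

From Pilot Require Import Defs.
From mathcomp Require Import all_boot all_order all_algebra all_fingroup.
From mathcomp Require Import all_classical all_reals all_analysis.
From mathcomp Require Import measurable_realfun lra.
Import Order.TTheory GRing.Theory Num.Theory.
Local Open Scope ring_scope.
Local Open Scope classical_set_scope.
Set Implicit Arguments. Unset Strict Implicit. Unset Printing Implicit Defensive.

Section coordinate_permutation.
Variables (R : realType) (n : nat).
Local Notation T := (n.-tuple R).
Implicit Types (s : {perm 'I_n}) (a b w : T).

Definition perm_tuple s w : T := [tuple tnth w (s i) | i < n].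

Lemma tnth_perm_tuple s w i : tnth (perm_tuple s w) i = tnth w (s i).
Proof. exact: tnth_mktuple. Qed.

Lemma measurable_perm_tuple s : measurable_fun setT (perm_tuple s).
Proof.
apply/measurable_fun_tnthP => i.
rewrite (_ : _ \o _ = @tnth _ R ^~ (s i)); first exact: measurable_tnth.
by apply/funext => w /=; rewrite tnth_perm_tuple.
Qed.

Definition box a b : set T := [set x | forall i, tnth a i <= tnth x i < tnth b i].

Definition boxes : set (set T) := [set B | exists a b, B = box a b].

Definition cube (k : nat) : set T := box [tuple - k%:R | _ < n] [tuple k%:R | _ < n].

Lemma measurable_box a b : measurable (box a b).
Proof.
have -> : box a b =
    \bigcap_(i in [set: 'I_n]) (@tnth _ R ^~ i) @^-1` `[tnth a i, tnth b i[.
  apply/seteqP; split => x /= xab i; first by move=> _; rewrite /= in_itv; apply: xab.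
  by have := xab i I; rewrite /= in_itv.
apply: fin_bigcap_measurable => // i _.
by rewrite -[X in measurable X]setTI; apply: measurable_tnth.
Qed.

Lemma setI_closed_boxes : setI_closed boxes.
Proof.
move=> _ _ [a [b ->]] [a' [b' ->]].
exists [tuple Num.max (tnth a i) (tnth a' i) | i < n],
       [tuple Num.min (tnth b i) (tnth b' i) | i < n].
apply/seteqP; split => x /=.
  move=> [xab xab'] i; rewrite !tnth_mktuple ge_max lt_min.
  by case/andP: (xab i) => -> ->; case/andP: (xab' i) => -> ->.
move=> xab; split => i; have := xab i; rewrite !tnth_mktuple ge_max lt_min;
  by case/andP => /andP[? ?] /andP[? ?]; apply/andP.
Qed.

Lemma bigcup_cube : \bigcup_k cube k = setT.
Proof.
apply/seteqP; split => // y _.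
have y_ge0 : 0 <= \sum_i `|tnth y i| by apply: sumr_ge0 => i _.
exists (Num.Def.archi_bound (\sum_i `|tnth y i|)) => //= j; rewrite !tnth_mktuple.
have : `|tnth y j| < (Num.Def.archi_bound (\sum_i `|tnth y i|))%:R.
  apply: le_lt_trans (archi_boundP y_ge0).
  by rewrite (bigD1 j) //= lerDl sumr_ge0.
by rewrite ltr_norml => /andP[/ltW -> ->].
Qed.

Lemma preimage_tnth_itvcy_boxes i x :
  <<s boxes >> ((@tnth _ R ^~ i) @^-1` `[x, +oo[).
Proof.
pose a k : T := [tuple if j == i then x else - k%:R | j < n].
have -> : (@tnth _ R ^~ i) @^-1` `[x, +oo[ = \bigcup_k box (a k) [tuple k%:R | _ < n].
  apply/seteqP; split => y /=; rewrite in_itv /= andbT.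
    move=> xy; have [k _ yk] : (\bigcup_k cube k) y by rewrite bigcup_cube.
    exists k => // j; have := yk j; rewrite !tnth_mktuple.
    by case: eqP => [->|//] /andP[_ ->]; rewrite xy.
  by case=> k _ /(_ i); rewrite !tnth_mktuple eqxx => /andP[].
have [_ _ sigmaU] := smallest_sigma_algebra setT boxes.
by apply: sigmaU => k; apply: sub_sigma_algebra; exists (a k), [tuple k%:R | _ < n].
Qed.

Lemma measurable_sub_boxes : measurable `<=` <<s boxes >>.
Proof.
apply: smallest_sub; first exact: smallest_sigma_algebra.
apply: (big_ind (fun S => S `<=` <<s boxes >>)) => //.
  by move=> ? ? ? ?; rewrite subUset.
move=> i _ _ [B mB <-].
pose S := image_set_system setT (@tnth _ R ^~ i) <<s boxes >>.
have sigmaS : sigma_algebra setT S by exact/sigma_algebra_image/smallest_sigma_algebra.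
(* The half-lines [x, +oo[ generate the Borel sets of R. *)
have halflines_S : @RGenCInfty.G R `<=` S.
  move=> _ [x ->]; rewrite /S /image_set_system /= setTI.
  exact: preimage_tnth_itvcy_boxes.
apply: (smallest_sub sigmaS halflines_S).
exact: (eq_ind _ id mB _ (congr1 (fun S => S B) (@RGenCInfty.measurableE R))).
Qed.

Lemma preimage_perm_tuple_box s a b :
  perm_tuple s @^-1` box a b = box (perm_tuple s^-1 a) (perm_tuple s^-1 b).
Proof.
apply/seteqP; split => x /= xab i.
  by rewrite !tnth_perm_tuple; have := xab (s^-1 i)%g; rewrite tnth_perm_tuple permKV.
by rewrite tnth_perm_tuple; have := xab (s i); rewrite !tnth_perm_tuple permK.
Qed.

Variable mu : {measure set T -> \bar R}.
Hypothesis mu_box : forall a b, (forall i, tnth a i <= tnth b i) ->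
  mu (box a b) = (\prod_(i < n) (tnth b i - tnth a i))%:E.

Lemma measure_box_perm_tuple s a b :
  mu (box (perm_tuple s a) (perm_tuple s b)) = mu (box a b).
Proof.
have [ab|] := pselect (forall i, tnth a i <= tnth b i).
  rewrite !mu_box //; last by move=> i; rewrite !tnth_perm_tuple.
  congr EFin; rewrite [RHS](reindex_inj (@perm_inj _ s)) /=.
  by apply: eq_bigr => i _; rewrite !tnth_perm_tuple.
move=> /existsNP[i /negP]; rewrite -ltNge => ba.
have empty_box c c' j : tnth c' j < tnth c j -> box c c' = set0.
  move=> lt_c'c; apply/seteqP; split => // x /(_ j) /andP[cx xc'].
  by have := lt_trans (le_lt_trans cx xc') lt_c'c; rewrite ltxx.
rewrite (empty_box a b i) // (empty_box _ _ (s^-1 i)%g) //.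
by rewrite !tnth_perm_tuple permKV.
Qed.

Lemma measure_preimage_perm_tuple s A :
  measurable A -> mu (perm_tuple s @^-1` A) = mu A.
Proof.
move=> mA; apply/esym.
apply: (g_sigma_algebra_measure_unique boxes _ cube _ bigcup_cube mu
  (pushforward mu (perm_tuple s))).
- by move=> _ [a [b ->]]; apply: measurable_box.
- by move=> k; exists [tuple - k%:R | _ < n], [tuple k%:R | _ < n].
- exact: measurable_perm_tuple.
- exact: setI_closed_boxes.
- move=> ? _ [a [b ->]]; rewrite /= /pushforward preimage_perm_tuple_box.
  by rewrite measure_box_perm_tuple.
- move=> k; rewrite mu_box ?ltry // => i; rewrite !tnth_mktuple.
  by rewrite (@le_trans _ _ 0) // oppr_le0.
- exact: measurable_sub_boxes.
Qed.

End coordinate_permutation.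

Section mlp_action.
Variables (R : realType) (L : nat) (d : nat -> nat).
Local Notation W := (weight_space R L d).
Local Notation coordI := (coordI L d).
Implicit Types (g : group_G L d) (w : W).

Lemma tr_perm_mx_mulmx_entry m k (s : {perm 'I_m}) (t : {perm 'I_k})
    (M : 'M[R]_(m, k)) a b :
  ((perm_mx s)^T *m M *m perm_mx t) a b = M (s^-1 a)%g (t^-1 b)%g.
Proof.
rewrite tr_perm_mx -row_permE -[perm_mx t](congr1 perm_mx (invgK t)) -col_permE.
by rewrite !mxE.
Qed.

Lemma tr_perm_mx_mulcol_entry m (s : {perm 'I_m}) (v : 'cV[R]_m) a :
  ((perm_mx s)^T *m v) a ord0 = v (s^-1 a)%g ord0.
Proof. by rewrite tr_perm_mx -row_permE mxE. Qed.

Definition coord_act g (c : coordI) : coordI :=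
  match c with
  | inl (existT l (a, b)) => inl (existT _ l ((permk g l.+1)^-1 a, (permk g l)^-1 b)%g)
  | inr (existT l a) => inr (existT _ l ((permk g l.+1)^-1 a)%g)
  end.

Definition coord_act_inv g (c : coordI) : coordI :=
  match c with
  | inl (existT l (a, b)) => inl (existT _ l (permk g l.+1 a, permk g l b))
  | inr (existT l a) => inr (existT _ l (permk g l.+1 a))
  end.

Lemma coord_actK g : cancel (coord_act g) (coord_act_inv g).
Proof. by case=> [[l [a b]]|[l a]] /=; rewrite !permKV. Qed.

Lemma tnth_mlp_act g w i : tnth (mlp_act g w) i = Defs.coord w (coord_act g (enum_val i)).
Proof.
rewrite tnth_mktuple; case: (enum_val i) => [[l [a b]]|[l a]] /=.
  by rewrite tr_perm_mx_mulmx_entry mxE.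
by rewrite tr_perm_mx_mulcol_entry mxE.
Qed.

Definition coord_perm g : {perm 'I_(dimW L d)} :=
  perm (inj_comp (@enum_rank_inj _) (inj_comp (can_inj (coord_actK g)) enum_val_inj)).

Lemma mlp_act_perm_tuple g : (mlp_act g : W -> W) = perm_tuple (coord_perm g).
Proof.
apply/funext => w; apply: eq_from_tnth => i.
by rewrite tnth_perm_tuple tnth_mlp_act permE.
Qed.

Lemma measurable_mlp_act g : measurable_fun setT (mlp_act g : W -> W).
Proof. by rewrite mlp_act_perm_tuple; apply: measurable_perm_tuple. Qed.

Lemma measure_preimage_mlp_act (mu : {measure set W -> \bar R}) g A :
  is_lebesgue mu -> measurable A -> mu (mlp_act g @^-1` A) = mu A.
Proof. by rewrite mlp_act_perm_tuple => mu_leb; apply: measure_preimage_perm_tuple. Qed.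

Definition group_G1 : group_G L d := [ffun => 1%g].

Lemma permk_G1 k : permk group_G1 k = 1%g.
Proof.
case: k => [|k] //=; move: (erefl (k < L.-1)%N).
by case: {2 3}(k < L.-1)%N => // k_lt; rewrite ffunE.
Qed.

Lemma ginv_G1 : ginv group_G1 = group_G1.
Proof. by apply/ffunP => k; rewrite !ffunE invg1. Qed.

Lemma coord_act_G1 : coord_act group_G1 =1 id.
Proof.
by case=> [[l [a b]]|[l a]]; rewrite /coord_act; cbv beta iota;
  rewrite !permk_G1 !invg1 !perm1.
Qed.

Lemma mlp_act_G1 w : mlp_act group_G1 w = w.
Proof.
by apply: eq_from_tnth => i; rewrite tnth_mlp_act coord_act_G1 /Defs.coord enum_valK.
Qed.

Lemma ginvK : involutive (@ginv L d).
Proof. by move=> g; apply/ffunP => k; rewrite !ffunE invgK. Qed.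

End mlp_action.

Section average.
Variables (R : numFieldType) (I : finType).
Hypothesis I_gt0 : (0 < #|{: I}|)%N.

Definition avg (a : I -> R) : R := (#|{: I}|%:R)^-1 * \sum_(i : I) a i.

Lemma invr_card_gt0 : 0 < (#|{: I}|%:R)^-1 :> R.
Proof. by rewrite invr_gt0 ltr0n. Qed.

Lemma avg_cst (x : R) : avg (fun=> x) = x.
Proof.
rewrite /avg sumr_const -[x *+ _]mulr_natl.
by rewrite mulKf // pnatr_eq0 -lt0n.
Qed.

Lemma eavg_cst (x : \bar R) : x \is a fin_num ->
  (((#|{: I}|%:R)^-1)%:E * \sum_(i : I) x)%E = x.
Proof. by move=> /fineK<-; rewrite sumEFin -EFinM; apply/congr1/avg_cst. Qed.

Lemma avg_ge0 (a : I -> R) : (forall i, 0 <= a i) -> 0 <= avg a.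
Proof. by move=> a_ge0; rewrite mulr_ge0 ?sumr_ge0. Qed.

Lemma avg_eq0 (a : I -> R) : (forall i, 0 <= a i) -> avg a = 0 -> forall i, a i = 0.
Proof.
move=> a_ge0 /eqP; rewrite mulf_eq0 gt_eqF ?invr_card_gt0 //= => /eqP sum0 i.
exact: (psumr_eq0P (fun i _ => a_ge0 i) sum0).
Qed.

Lemma ler_avg (a b : I -> R) : (forall i, a i <= b i) -> avg a <= avg b.
Proof.
by move=> ab; apply: ler_wpM2l; [exact/ltW/invr_card_gt0 | exact: ler_sum].
Qed.

Lemma avgD (a b : I -> R) : avg (fun i => a i + b i) = avg a + avg b.
Proof. by rewrite /avg big_split mulrDr. Qed.

Lemma avgB (a b : I -> R) : avg (fun i => a i - b i) = avg a - avg b.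
Proof. by rewrite /avg sumrB mulrBr. Qed.

Lemma avgMr (a : I -> R) (k : R) : avg (fun i => a i * k) = avg a * k.
Proof. by rewrite /avg -mulr_suml mulrA. Qed.

Lemma avg_le_eq (a b : I -> R) :
  (forall i, a i <= b i) -> avg a = avg b -> forall i, a i = b i.
Proof.
move=> ab avg_ab i; apply/eqP; rewrite eq_sym -subr_eq0; apply/eqP; move: i.
apply: (@avg_eq0 (fun i => b i - a i)) => [i|]; first by rewrite subr_ge0.
by rewrite avgB avg_ab subrr.
Qed.

End average.

Section xlnx.
Variable R : realType.

Lemma ln_le_subr1 (t : R) : 0 < t -> ln t <= t - 1.
Proof. by move=> t_gt0; have := expR_ge1Dx (ln t); rewrite lnK ?posrE // lerBrDl. Qed.

Lemma ln_lt_subr1 (t : R) : 0 < t -> t != 1 -> ln t < t - 1.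
Proof.
move=> t_gt0 t_neq1; have := @expR_gt1Dx R (ln t); rewrite lnK ?posrE // ltrBrDl.
by apply; rewrite ln_eq0.
Qed.

Lemma mul_ln_tangent_gap (a m b : R) : 0 < a -> 0 < m -> 0 < b ->
  a * ln (a / b) - (a * ln (m / b) + (a - m)) = a * (m / a - 1 - ln (m / a)).
Proof.
move=> a_gt0 m_gt0 b_gt0.
rewrite !ln_div ?posrE // !mulrBr mulrCA mulfV ?gt_eqF // mulr1; lra.
Qed.

Lemma mul_ln_tangent_le (a m b : R) : 0 <= a -> 0 < m -> 0 < b ->
  a * ln (m / b) + (a - m) <= a * ln (a / b).
Proof.
rewrite le0r => /predU1P[->|a_gt0] m_gt0 b_gt0.
  by rewrite !mul0r add0r subr_le0 ltW.
rewrite -subr_ge0 mul_ln_tangent_gap //.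
by apply: mulr_ge0; [exact: ltW | rewrite subr_ge0 ln_le_subr1 ?divr_gt0].
Qed.

Lemma mul_ln_tangent_eq (a m b : R) : 0 <= a -> 0 < m -> 0 < b ->
  a * ln (m / b) + (a - m) = a * ln (a / b) -> a = m.
Proof.
rewrite le0r => /predU1P[->|a_gt0] m_gt0 b_gt0.
  by rewrite !mul0r add0r sub0r => /eqP; rewrite oppr_eq0 gt_eqF.
move=> /eqP; rewrite eq_sym -subr_eq0 mul_ln_tangent_gap // mulf_eq0 gt_eqF //=.
apply: contraTeq => a_neq_m; rewrite subr_eq0 eq_sym lt_eqF // ln_lt_subr1 ?divr_gt0 //.
by apply: contra a_neq_m => /eqP/divr1_eq ->.
Qed.

End xlnx.

Section jensen.
Variables (R : realType) (I : finType).
Hypothesis I_gt0 : (0 < #|{: I}|)%N.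
Implicit Types (a : I -> R) (b : R).

(* Averaging the tangent lines at [avg a] gives back the value at [avg a]. *)
Let avg_tangent a b :
  avg (fun i => a i * ln (avg a / b) + (a i - avg a)) = avg a * ln (avg a / b).
Proof. by rewrite avgD avgMr avgB avg_cst // subrr addr0. Qed.

Lemma avg_mul_ln_le a b : 0 < b -> (forall i, 0 <= a i) ->
  avg a * ln (avg a / b) <= avg (fun i => a i * ln (a i / b)).
Proof.
move=> b_gt0 a_ge0; have := avg_ge0 a_ge0; rewrite le0r => /predU1P[avg0|avg_gt0].
  by rewrite avg0 mul0r; apply: avg_ge0 => // i; rewrite (avg_eq0 I_gt0 a_ge0 avg0) mul0r.
by rewrite -{1}avg_tangent; apply: ler_avg => // i; apply: mul_ln_tangent_le.
Qed.

Lemma avg_mul_ln_eq a b : 0 < b -> (forall i, 0 <= a i) ->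
  avg a * ln (avg a / b) = avg (fun i => a i * ln (a i / b)) -> forall i, a i = avg a.
Proof.
move=> b_gt0 a_ge0; have := avg_ge0 a_ge0; rewrite le0r => /predU1P[avg0|avg_gt0].
  by move=> _ i; rewrite avg0 (avg_eq0 I_gt0 a_ge0 avg0).
rewrite -{1}avg_tangent => /avg_le_eq eq_tangent i.
by apply: mul_ln_tangent_eq (eq_tangent _ _ i) => // {}i; apply: mul_ln_tangent_le.
Qed.

Local Open Scope ereal_scope.

Lemma klterm_gt0r (x : R) b : (0 < b)%R -> klterm x b = (x * ln (x / b))%:E.
Proof.
move=> b_gt0; rewrite /klterm (gt_eqF b_gt0).
by case: (x =P 0%R) => [->|]; rewrite ?mul0r.
Qed.

Lemma klterm0r_ge0 (x : R) : 0 <= klterm x 0.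
Proof. by rewrite /klterm eqxx; case: ifP. Qed.

Lemma sum_klterm0r a j : a j != 0%R -> \sum_i klterm (a i) 0 = +oo.
Proof.
move=> aj_neq0; rewrite (bigD1 j) //= {1}/klterm (negbTE aj_neq0) eqxx addye //.
by rewrite gt_eqF // (lt_le_trans (ltNyr 0)) // sume_ge0 // => i _; apply: klterm0r_ge0.
Qed.

Lemma eavg_klterm_gt0r a b : (0 < b)%R ->
  ((#|{: I}|%:R)^-1)%:E * \sum_i klterm (a i) b = (avg (fun i => a i * ln (a i / b)))%:E.
Proof.
by move=> b_gt0; under eq_bigr do rewrite klterm_gt0r //; rewrite sumEFin -EFinM.
Qed.

Lemma klterm_avg_le a b : (0 <= b)%R -> (forall i, 0 <= a i)%R ->
  klterm (avg a) b <= ((#|{: I}|%:R)^-1)%:E * \sum_i klterm (a i) b.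
Proof.
rewrite le0r => /predU1P[->|b_gt0] a_ge0; last first.
  by rewrite eavg_klterm_gt0r // klterm_gt0r // lee_fin avg_mul_ln_le.
have [a0|/existsNP[j /eqP aj_neq0]] := pselect (forall i, a i = 0%R).
  have -> : a = fun=> 0%R by apply/funext.
  have klterm00 : klterm 0 0 = 0 :> \bar R by rewrite /klterm eqxx.
  by rewrite avg_cst // klterm00 big1 ?mule0.
by rewrite (sum_klterm0r aj_neq0) gt0_muley ?leey // lte_fin invr_card_gt0.
Qed.

Lemma klterm_avg_eq a b : (0 <= b)%R -> (forall i, 0 <= a i)%R ->
  \sum_i klterm (a i) b \is a fin_num ->
  klterm (avg a) b = ((#|{: I}|%:R)^-1)%:E * \sum_i klterm (a i) b ->
  forall i, a i = avg a.
Proof.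
rewrite le0r => /predU1P[->|b_gt0] a_ge0 sum_fin; last first.
  by rewrite eavg_klterm_gt0r // klterm_gt0r // => -[]; apply: avg_mul_ln_eq.
have a0 i : a i = 0%R.
  by apply/eqP; apply: contraTT sum_fin => /sum_klterm0r ->.
by move=> _ i; rewrite [in RHS](_ : a = fun=> 0%R) ?avg_cst //; apply/funext.
Qed.

End jensen.

Lemma fin_num_subeI (R : numDomainType) (x a b : \bar R) :
  x \is a fin_num -> a \is a fin_num -> b \is a fin_num ->
  (x - a = x - b)%E <-> a = b.
Proof.
move=> /fineK<- /fineK<- /fineK<-; split => [|->//].
by rewrite -!EFinB => -[] /addrI /oppr_inj ->.
Qed.

Section integration.
Context d (T : measurableType d) (R : realType).
Variable mu : {measure set T -> \bar R}.
Local Open Scope ereal_scope.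

Lemma integrable_ae_eq (f g : T -> \bar R) : mu.-integrable setT f ->
  measurable_fun setT g -> ae_eq mu setT f g -> mu.-integrable setT g.
Proof.
move=> intf mg fg; apply/integrableP; split => //.
rewrite -(ge0_ae_eq_integral (f := fun x => `|f x|)) //.
- by case/integrableP: intf.
- exact/measurableT_comp/(measurable_int mu intf).
- exact: measurableT_comp.
- by apply: filterS fg => x fgx /fgx ->.
Qed.

Lemma ae_eq_le_integral_eq (f g : T -> \bar R) :
  mu.-integrable setT f -> mu.-integrable setT g -> (forall x, f x <= g x) ->
  \int[mu]_x f x = \int[mu]_x g x -> {ae mu, forall x, f x = g x}.
Proof.
move=> intf intg fg int_fg.
have intD : mu.-integrable setT (fun x => g x - f x) by exact: integrableB.
have mD := measurable_int mu intD.
have fin_fg : {ae mu, forall x, f x \is a fin_num /\ g x \is a fin_num}.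
  apply: filterS2 (integrable_ae measurableT intf) (integrable_ae measurableT intg).
  by move=> x /(_ I) ? /(_ I).
have absD : ae_eq mu setT (fun x => `|g x - f x|) (fun x => g x - f x).
  by apply: filterS fin_fg => x [finf _] _; rewrite gee0_abs // sube_ge0 ?finf.
have /(ae_eq_integral_abs mu measurableT mD).1 D0 : \int[mu]_x `|g x - f x| = 0.
  rewrite (ae_eq_integral (fun x => g x - f x)) //; last exact: measurableT_comp.
  rewrite integralB // int_fg subee //; exact: integrable_fin_num.
apply: filterS2 fin_fg D0 => x [finf fing] /(_ I) /eqP.
by rewrite sube_eq ?fin_num_adde_defr // add0e => /eqP ->.
Qed.

Section measure_preserving.
Variable h : T -> T.
Hypothesis mh : measurable_fun setT h.
Hypothesis muh : forall A, measurable A -> mu (h @^-1` A) = mu A.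

Let pushforward_id A : measurable A -> A `<=` setT -> pushforward mu h A = mu A.
Proof. by move=> mA _; apply: muh. Qed.

Lemma ge0_integral_preserving (f : T -> \bar R) :
  measurable_fun setT f -> (forall x, 0 <= f x) ->
  \int[mu]_x f (h x) = \int[mu]_x f x.
Proof.
move=> mf f_ge0.
have := ge0_integral_pushforward mh mu measurableT mf (fun y _ => f_ge0 y).
by rewrite preimage_setT => <-; apply: eq_measure_integral pushforward_id.
Qed.

Lemma integrable_preserving (f : T -> \bar R) :
  mu.-integrable setT f -> mu.-integrable setT (f \o h).
Proof.
move=> intf; have mf := measurable_int mu intf.
apply/integrableP; split; first exact: measurableT_comp.
rewrite (ge0_integral_preserving (f := fun x => `|f x|)) //; last exact: measurableT_comp.
by case/integrableP: intf.
Qed.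

Lemma integral_preserving (f : T -> \bar R) :
  mu.-integrable setT f -> \int[mu]_x f (h x) = \int[mu]_x f x.
Proof.
move=> intf; have mf := measurable_int mu intf.
have := integral_pushforward mh mf (D := setT) _ measurableT.
rewrite preimage_setT => <-; last exact: integrable_preserving.
exact: eq_measure_integral pushforward_id.
Qed.

End measure_preserving.
End integration.

Lemma measurable_klterm d (T : measurableType d) (R : realType) (f g : T -> R) :
  measurable_fun setT f -> measurable_fun setT g ->
  (forall x, 0 <= f x) -> (forall x, 0 <= g x) ->
  measurable_fun setT (fun x => klterm (f x) (g x)).
Proof.
move=> mf mg f_ge0 g_ge0.
have -> : (fun x => klterm (f x) (g x)) = fun x => if f x == 0 then 0%E
    else if g x == 0 then +oo%E else (f x * (ln (f x) - ln (g x)))%:E.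
  apply/funext => x; rewrite /klterm; case: ifPn => // fx; case: ifPn => // gx.
  by rewrite ln_div // posrE lt0r ?fx ?gx ?f_ge0 ?g_ge0.
apply: measurable_fun_ifT; [exact: measurable_fun_eqr | exact: measurable_cst |].
apply: measurable_fun_ifT; [exact: measurable_fun_eqr | exact: measurable_cst |].
apply/measurable_EFinP; apply: measurable_funM => //.
by apply: measurable_funB; apply: measurableT_comp.
Qed.

Section symmetrization.
Context d (T : measurableType d) (R : realType).
Variable mu : {measure set T -> \bar R}.
Variables (J : finType) (h : J -> T -> T) (i0 : J).
Hypothesis h_id : forall x, h i0 x = x.
Hypothesis mh : forall i, measurable_fun setT (h i).
Hypothesis muh : forall i A, measurable A -> mu (h i @^-1` A) = mu A.
Local Open Scope ereal_scope.

Let J_gt0 : (0 < #|{: J}|)%N.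
Proof. by apply/card_gt0P; exists i0. Qed.

Let c : R := (#|{: J}|%:R)^-1.

Let symm (q : T -> R) x := avg (fun i => q (h i x)).

Lemma integral_symm_mul (q : T -> R) (F : T -> \bar R) :
  (forall x, 0 <= q x)%R -> (forall i x, F (h i x) = F x) ->
  mu.-integrable setT (fun x => (q x)%:E * F x) ->
  \int[mu]_x ((symm q x)%:E * F x) = \int[mu]_x ((q x)%:E * F x).
Proof.
move=> q_ge0 F_inv intqF.
have intqFh i : mu.-integrable setT (fun x => (q (h i x))%:E * F x).
  rewrite (_ : (fun x => _) = (fun x => (q x)%:E * F x) \o h i).
    exact: (integrable_preserving (mh i) (muh i)).
  by apply/funext => x /=; rewrite F_inv.
transitivity (\int[mu]_x (c%:E * \sum_i (q (h i x))%:E * F x)).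
  apply: eq_integral => x _; rewrite EFinM -muleA -sumEFin ge0_sume_distrl //.
  by move=> i _; rewrite lee_fin.
rewrite integralZl //; last exact: integrable_sum.
rewrite integral_sum // (eq_bigr (fun=> \int[mu]_x ((q x)%:E * F x))).
  by rewrite eavg_cst //; apply: integrable_fin_num.
move=> i _; rewrite -(integral_preserving (mh i) (muh i) intqF).
by apply: eq_integral => x _; rewrite F_inv.
Qed.

Variables (p q : T -> R).
Hypotheses (mp : measurable_fun setT p) (p_ge0 : forall x, (0 <= p x)%R).
Hypothesis p_inv : forall i, {ae mu, forall x, p (h i x) = p x}.
Hypotheses (mq : measurable_fun setT q) (q_ge0 : forall x, (0 <= q x)%R).
Hypothesis int_kl : mu.-integrable setT (fun x => klterm (q x) (p x)).
Hypothesis int_kl_symm : mu.-integrable setT (fun x => klterm (symm q x) (p x)).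

Let klterm_comp i x := klterm (q (h i x)) (p x).

Let klterm_comp_ae i :
  ae_eq mu setT (fun x => klterm (q (h i x)) (p (h i x))) (klterm_comp i).
Proof. by apply: filterS (p_inv i) => x px _; rewrite /klterm_comp px. Qed.

Let measurable_klterm_comp i : measurable_fun setT (klterm_comp i).
Proof. by apply: measurable_klterm => //; apply: measurableT_comp. Qed.

Let integrable_klterm_comp i : mu.-integrable setT (klterm_comp i).
Proof.
apply: integrable_ae_eq (klterm_comp_ae i) => //.
exact: (integrable_preserving (mh i) (muh i) int_kl).
Qed.

Let integral_klterm_comp i :
  \int[mu]_x klterm_comp i x = \int[mu]_x klterm (q x) (p x).
Proof.
rewrite -(ae_eq_integral _ _ measurableT _ _ (klterm_comp_ae i)) //.
  exact: (integral_preserving (mh i) (muh i) int_kl).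
exact: measurable_int (integrable_preserving (mh i) (muh i) int_kl).
Qed.

Let eavg_klterm x := c%:E * \sum_i klterm_comp i x.

Let integrable_sum_klterm_comp :
  mu.-integrable setT (fun x => \sum_i klterm_comp i x).
Proof. by apply: (integrable_sum measurableT) => i _; apply: integrable_klterm_comp. Qed.

Let integrable_eavg_klterm : mu.-integrable setT eavg_klterm.
Proof. exact: integrableZl integrable_sum_klterm_comp. Qed.

Let integral_eavg_klterm :
  \int[mu]_x eavg_klterm x = \int[mu]_x klterm (q x) (p x).
Proof.
rewrite /eavg_klterm integralZl // integral_sum //.
rewrite (eq_bigr _ (fun i _ => integral_klterm_comp i)).
by rewrite eavg_cst //; apply: integrable_fin_num.
Qed.

Lemma integral_klterm_symm_le :
  \int[mu]_x klterm (symm q x) (p x) <= \int[mu]_x klterm (q x) (p x).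
Proof.
rewrite -integral_eavg_klterm; apply: le_integral => // x _.
exact: klterm_avg_le.
Qed.

Lemma integral_klterm_symm_eqP :
  \int[mu]_x klterm (symm q x) (p x) = \int[mu]_x klterm (q x) (p x) <->
  forall i, {ae mu, forall x, q (h i x) = q x}.
Proof.
split.
  rewrite -integral_eavg_klterm => /ae_eq_le_integral_eq.
  move=> /(_ int_kl_symm integrable_eavg_klterm).
  move=> /(_ (fun x => klterm_avg_le J_gt0 (p_ge0 x) (fun i => q_ge0 (h i x)))).
  have sum_fin := integrable_ae measurableT integrable_sum_klterm_comp.
  move=> eq_ae i; apply: filterS2 eq_ae sum_fin => x eq_x /(_ I) fin_x.
  have /= all_eq := klterm_avg_eq J_gt0 (p_ge0 x) (fun i => q_ge0 (h i x)) fin_x eq_x.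
  by rewrite all_eq -(all_eq i0) h_id.
move=> q_inv; apply: ae_eq_integral => //.
- exact: measurable_int int_kl_symm.
- exact: measurable_int int_kl.
have q_inv_all : {ae mu, forall x i, q (h i x) = q x} by exact: filter_forall.
apply: filterS q_inv_all => x q_inv_x _.
rewrite /symm (_ : (fun i => q (h i x)) = fun=> q x) ?avg_cst //.
exact/funext.
Qed.

End symmetrization.

Unset Implicit Arguments.

Theorem corollary4p2 (R : realType) (L : nat) (d : nat -> nat)
  (mu : {measure set (weight_space R L d) -> \bar R})
  (prior lik : weight_space R L d -> R)
  (Theta : Type) (q : Theta -> weight_space R L d -> R) :
  is_lebesgue mu ->
  is_density mu prior -> G_invariant mu prior ->
  measurable_fun setT lik -> (forall w, 0 <= lik w) ->
  (forall (g : group_G L d) w, lik (mlp_act g w) = lik w) ->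
  (forall th, is_density mu (q th)) ->
  (forall th, mu.-integrable setT (fun w => ((q th w)%:E * elog (lik w))%E)) ->
  (forall th, mu.-integrable setT (fun w => klterm (q th w) (prior w))) ->
  (forall th, mu.-integrable setT
     (fun w => ((symmetrize (q th) w)%:E * elog (lik w))%E)) ->
  (forall th, mu.-integrable setT
     (fun w => klterm (symmetrize (q th) w) (prior w))) ->
  forall th,
    (elbo mu lik prior (q th) <= elbo mu lik prior (symmetrize (q th)))%E /\
    (elbo mu lik prior (symmetrize (q th)) = elbo mu lik prior (q th)
       <-> G_invariant mu (q th)).
Proof.
move=> mu_leb [mprior prior_ge0 _] prior_inv _ _ lik_inv q_dens int_ll int_kl _
  int_kl_symm th.
have [mq q_ge0 _] := q_dens th.
(* [symmetrize (q th)] is by definition [avg] of [q th] along the maps [h g]. *)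
pose h g : weight_space R L d -> _ := mlp_act (ginv g).
have h_id w : h (group_G1 L d) w = w by rewrite /h ginv_G1 mlp_act_G1.
have mh g : measurable_fun setT (h g) := measurable_mlp_act (ginv g).
have muh g A : measurable A -> mu (h g @^-1` A) = mu A :=
  measure_preimage_mlp_act (ginv g) mu_leb.
have ll_eq : expected_loglik mu lik (symmetrize (q th)) =
    expected_loglik mu lik (q th).
  by apply: (integral_symm_mul (group_G1 L d) mh muh) => // g w; rewrite /h lik_inv.
have kl_le := integral_klterm_symm_le (group_G1 L d) mh muh mprior prior_ge0
  (fun g => prior_inv (ginv g)) mq q_ge0 (int_kl th) (int_kl_symm th).
have kl_eqP := integral_klterm_symm_eqP h_id mh muh mprior prior_ge0
  (fun g => prior_inv (ginv g)) mq q_ge0 (int_kl th) (int_kl_symm th).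
split; first by rewrite /elbo ll_eq leeB.
rewrite /elbo ll_eq; apply: (iff_trans (fin_num_subeI _ _ _)).
- exact: integrable_fin_num (int_ll th).
- exact: integrable_fin_num (int_kl_symm th).
- exact: integrable_fin_num (int_kl th).
apply: (iff_trans kl_eqP); split => q_inv g; last exact: q_inv.
by rewrite -[g]ginvK; apply: q_inv.
Qed.
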